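(* Let $G$ be an ordered graph, let $xy\in E(G)$ and $i\in\mathbb N$. If $\mathrm{h}_G(xy)>i$, then there is an edge $xz\in E(G)$ with $\mathrm{h}_G(xz)=i$ and $\mathrm{v}_G(xz)=x$.
   Context: An ordered graph is a finite simple graph $G$ equipped with a total order $\le_G$ on $E(G)$ and a total order $\le^V_G$ on $V(G)$. Let $\mathbb N=\{1,2,\dots\}$. Define $\preceq_{\mathrm{lex}}$ on $\mathbb N\times V(G)$ by $(i,v)\preceq_{\mathrm{lex}}(i',v')$ iff $i<i'$, or $i=i'$ and $v\le^V_G v'$. The height table $\mathrm{HT}(G)$ is a partially filled array indexed by $\mathbb N\times V(G)$, built by going through all $(i,v)$ in $\preceq_{\mathrm{lex}}$-increasing order and setting the entry at $(i,v)$ to be the $\le_G$-largest edge containing $v$ not yet entered into the table (blank if none remain). Every edge is entered exactly once; $\mathrm{ht}_G(e)=(\mathrm{h}_G(e),\mathrm{v}_G(e))$ is the position of $e$, with $\mathrm{h}_G(e)$ its row and $\mathrm{v}_G(e)$ its column. *)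

From mathcomp Require Import all_boot.
Set Implicit Arguments. Unset Strict Implicit. Unset Printing Implicit Defensive.

Definition is_total_order (A : Type) (D : A -> Prop) (le : rel A) : Prop :=
  (forall x, D x -> le x x) /\
  (forall x y, D x -> D y -> le x y -> le y x -> x = y) /\
  (forall x y z, D x -> D y -> D z -> le x y -> le y z -> le x z) /\
  (forall x y, D x -> D y -> le x y || le y x).

Definition ordered_graph (T : finType) (leV : rel T) (E : {set {set T}})
    (leE : rel {set T}) : Prop :=
  (forall e, e \in E -> #|e| = 2) /\
  is_total_order (fun _ => True) leV /\
  is_total_order (fun e => e \in E) leE.

Section HeightTable.
Variables (T : finType) (leV : rel T) (E : {set {set T}}) (leE : rel {set T}).

Definition vlist : seq T := sort leV (enum T).

Definition choose_edge (R : {set {set T}}) (v : T) : option {set T} :=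
  [pick e in R | (v \in e) && [forall f in R, (v \in f) ==> leE f e]].

Definition chosen_set (R : {set {set T}}) (v : T) : {set {set T}} :=
  if choose_edge R v is Some e then [set e] else set0.

Fixpoint process_row (R : {set {set T}}) (s : seq T) : {set {set T}} :=
  match s with
  | [::] => R
  | v :: s' => process_row (R :\: chosen_set R v) s'
  end.

(* edges not yet entered before row i (rows are numbered 1, 2, ...) *)
Definition rem_row (i : nat) : {set {set T}} :=
  iter i.-1 (fun R => process_row R vlist) E.

Definition rem_at (i : nat) (v : T) : {set {set T}} :=
  process_row (rem_row i) (take (index v vlist) vlist).

(* the entry of HT(G) at position (i, v), for i >= 1 (None = blank) *)
Definition HT_entry (i : nat) (v : T) : option {set T} :=
  choose_edge (rem_at i v) v.

(* ht_G(e) = (i, v), i.e. h_G(e) = i and v_G(e) = v *)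
Definition ht_is (e : {set T}) (i : nat) (v : T) : Prop :=
  0 < i /\ HT_entry i v = Some e.

End HeightTable.

From mathcomp Require Import all_boot.

(* The edges still available when the table reaches (h, v) only shrink as
   (h, v) increases, so xy, which is entered in a row after i, is still
   available at (i, x).  Hence some edge through x remains there and the
   leE-largest of them is entered at (i, x); being a 2-set containing x, it is
   of the form xz. *)

Set Implicit Arguments. Unset Strict Implicit.

Lemma total_order_seq_max (A : eqType) (D : A -> Prop) (le : rel A) a s :
  is_total_order D le -> D a -> (forall g, g \in s -> D g) ->
  exists2 m, m \in a :: s & forall g, g \in a :: s -> le g m.
Proof.
move=> [le_refl [_ [le_trans le_total]]].
elim: s a => [|b s IHs] a Da sD.
  by exists a => [|g]; rewrite ?mem_head // inE => /eqP ->; apply: le_refl.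
have [|m ms m_max] := IHs b (sD b (mem_head _ _)).
  by move=> g gs; apply: sD; rewrite inE gs orbT.
have [le_am | not_le_am] := boolP (le a m).
  exists m => [|g]; first by rewrite inE ms orbT.
  by rewrite inE => /predU1P [-> // | /m_max].
have le_ma : le m a by move: (le_total a m Da (sD m ms)); rewrite (negbTE not_le_am).
exists a => [|g]; first exact: mem_head.
rewrite inE => /predU1P [-> | gs]; first exact: le_refl.
exact: le_trans (sD g gs) (sD m ms) Da (m_max g gs) le_ma.
Qed.

Lemma card2_edge_through (T : finType) (e : {set T}) x :
  #|e| = 2 -> x \in e -> exists z, e = [set x; z].
Proof.
move/eqP/cards2P => [a [b [_ ->]]].
by move/set2P => [-> | ->]; [exists b | exists a; rewrite setUC].
Qed.

Section HeightTableMonotone.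
Variables (T : finType) (leV : rel T) (E : {set {set T}}) (leE : rel {set T}).

Local Notation next_row R := (process_row leE R (vlist leV)).

Lemma process_row_sub s R : process_row leE R s \subset R.
Proof.
elim: s R => [|v s IHs] R /=; first exact: subxx.
exact: subset_trans (IHs _) (subsetDl _ _).
Qed.

Lemma process_row_cat s1 s2 R :
  process_row leE R (s1 ++ s2) = process_row leE (process_row leE R s1) s2.
Proof. by elim: s1 R => [|v s1 IHs] R //=. Qed.

Lemma iter_next_row_sub n R : iter n (fun R => next_row R) R \subset R.
Proof.
elim: n => [|n IHn]; first exact: subxx.
exact: subset_trans (process_row_sub _ _) IHn.
Qed.

Lemma rem_row_antitone m n : m <= n -> rem_row leV E leE n \subset rem_row leV E leE m.
Proof.
move=> le_mn; rewrite /rem_row -!subn1 -(subnK (leq_sub2r 1 le_mn)) iterD.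
exact: iter_next_row_sub.
Qed.

Lemma rem_row_sub i : rem_row leV E leE i \subset E.
Proof. exact: iter_next_row_sub. Qed.

Lemma rem_at_sub_rem_row i v : rem_at leV E leE i v \subset rem_row leV E leE i.
Proof. exact: process_row_sub. Qed.

Lemma rem_row_succ_sub_rem_at i v :
  0 < i -> rem_row leV E leE i.+1 \subset rem_at leV E leE i v.
Proof.
case: i => // i _; rewrite /rem_at /rem_row /=.
rewrite -[X in process_row _ _ X](cat_take_drop (index v (vlist leV))).
by rewrite process_row_cat process_row_sub.
Qed.

Lemma choose_edge_mem (R : {set {set T}}) v e :
  choose_edge leE R v = Some e -> (e \in R) && (v \in e).
Proof.
by rewrite /choose_edge; case: pickP => // f /andP [fR /andP [vf _]] [<-]; rewrite fR.
Qed.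

Lemma choose_edge_exists (R : {set {set T}}) v e :
  is_total_order (fun f => f \in E) leE -> R \subset E -> e \in R -> v \in e ->
  exists f, choose_edge leE R v = Some f.
Proof.
move=> totE RE eR ve.
set through_v := [seq f : {set T} <- enum R | v \in f].
have in_through_v f : (f \in through_v) = (f \in R) && (v \in f).
  by rewrite mem_filter mem_enum andbC.
have eE : e \in E by apply: (subsetP RE).
have sub_E f : f \in through_v -> f \in E.
  by rewrite in_through_v => /andP [/(subsetP RE)].
have [m m_in m_max] := total_order_seq_max totE eE sub_E.
rewrite /choose_edge; case: pickP => [f _ | none]; first by exists f.
have /andP [mR vm] : (m \in R) && (v \in m).
  by move: m_in; rewrite inE => /predU1P [-> | ]; rewrite ?eR ?ve // in_through_v.
move: (none m); rewrite mR vm /= => /negP; case.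
apply/forall_inP => f fR; apply/implyP => vf.
by apply: m_max; rewrite inE in_through_v fR vf orbT.
Qed.

End HeightTableMonotone.

Theorem mainTheorem13 (T : finType) (leV : rel T) (E : {set {set T}})
    (leE : rel {set T}) (x y : T) (i hxy : nat) (vxy : T) :
  ordered_graph leV E leE ->
  [set x; y] \in E ->
  0 < i ->
  ht_is leV E leE [set x; y] hxy vxy ->
  i < hxy ->
  exists z : T, [set x; z] \in E /\ ht_is leV E leE [set x; z] i x.
Proof.
move=> [card2 [_ totE]] _ i_gt0 [_ /choose_edge_mem /andP [xy_rem _]] lt_ihxy.
set R := rem_at leV E leE i x.
have RE : R \subset E := subset_trans (rem_at_sub_rem_row _ _ _ _ _) (rem_row_sub _ _ _ _).
have xy_R : [set x; y] \in R.
  apply: subsetP xy_rem; apply: subset_trans (rem_at_sub_rem_row _ _ _ _ _) _.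
  exact: subset_trans (rem_row_antitone _ _ _ lt_ihxy) (rem_row_succ_sub_rem_at _ _ _ _ i_gt0).
have [e entry_e] := choose_edge_exists totE RE xy_R (set21 x y).
have /andP [eR xe] := choose_edge_mem entry_e.
have [z e_xz] := card2_edge_through (card2 e (subsetP RE e eR)) xe.
by exists z; rewrite -e_xz (subsetP RE e eR).
Qed.
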